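(* Let $(X,S)$ be an association scheme with the trivial partition $S=\{\mathbf{1},\sigma\}$, where $\mathbf{1}=\{(x,x)\mid x\in X\}$ and $\sigma=(X\times X)\setminus\mathbf{1}$, and suppose $\sharp X\geq3$. Let $F,G\colon\jmath(X,S)\to\jmath(X,S)$ be self-homotopy equivalences with $F\sim G$. Then $F=G$.
   Context: An association scheme is a pair $(X,S)$ with $X$ a finite set and $S$ a partition of $X\times X$ containing $\{(x,x)\mid x\in X\}$, closed under $g\mapsto g^*=\{(y,x)\mid(x,y)\in g\}$, such that for all $e,f,g\in S$ the number $\sharp\{y\in X\mid(x,y)\in e,(y,z)\in f\}$ is the same for all $(x,z)\in g$. The quasi-schemoid $\jmath(X,S)=(\mathcal{C},S)$ has $ob(\mathcal{C})=X$, $\mathrm{Hom}_{\mathcal{C}}(y,x)=\{(x,y)\}$, composition $(z,x)\circ(x,y)=(z,y)$, and partition $S$ of $mor(\mathcal{C})=X\times X$. A morphism of quasi-schemoids is a functor sending each block of the source partition into some block of the target partition. Product: $(\mathcal{C},S)\times(\mathcal{E},S')=(\mathcal{C}\times\mathcal{E},\{\sigma\times\tau\})$. $[1]$ has objects $0,1$ and one non-identity morphism $0\to1$; $I=([1],\{\{f\}\}_{f})$. A homotopy $H\colon F\Rightarrow G$ is a morphism $H\colon(\mathcal{C},S)\times I\to(\mathcal{D},S')$ with $H\circ\varepsilon_0=F$, $H\circ\varepsilon_1=G$ ($\varepsilon_i(a)=(a,i)$, $\varepsilon_i(f)=(f,1_i)$). $F\sim G$ means there is a homotopy $F\Rightarrow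 G$ or $G\Rightarrow F$; $F\simeq G$ means a finite chain $F=F_0\sim\cdots\sim F_n=G$. A self-homotopy equivalence of $A$ is a morphism $F\colon A\to A$ for which there is $G\colon A\to A$ with $FG\simeq1$ and $GF\simeq1$. *)

From mathcomp Require Import all_boot.
From Stdlib Require Import Relations.Relation_Operators.

Set Implicit Arguments.
Unset Strict Implicit.
Unset Printing Implicit Defensive.

(* Objects of [1]: bool, with false = 0 and true = 1. *)
Inductive mor1 : Type := id0 | id1 | arr01.

Definition dom1 (g : mor1) : bool :=
  match g with id0 => false | id1 => true | arr01 => false end.
Definition cod1 (g : mor1) : bool :=
  match g with id0 => false | id1 => true | arr01 => true end.
Definition idm1 (i : bool) : mor1 := if i then id1 else id0.
(* comp1 g h = g \o h ; only meaningful when dom1 g = cod1 h *)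
Definition comp1 (g h : mor1) : mor1 :=
  match g, h with
  | id0, id0 => id0
  | id1, id1 => id1
  | id1, arr01 => arr01
  | arr01, id0 => arr01
  | _, _ => g
  end.

Section JX.
Variable X : finType.

(* mor(C) = X * X ; (x,y) is the unique morphism y -> x *)
Definition jdom (m : X * X) : X := m.2.
Definition jcod (m : X * X) : X := m.1.
Definition jid (a : X) : X * X := (a, a).
Definition jcomp (m n : X * X) : X * X := (m.1, n.2).
(* the trivial partition S = {1, sigma}: true = block 1 (diagonal), false = sigma *)
Definition jblk (m : X * X) : bool := m.1 == m.2.

Definition qmor := ((X -> X) * (X * X -> X * X))%type.

Definition is_functor (F : qmor) : Prop :=
  [/\ (forall m, jdom (F.2 m) = F.1 (jdom m) /\ jcod (F.2 m) = F.1 (jcod m)),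
      (forall a, F.2 (jid a) = jid (F.1 a)) &
      (forall m n, jdom m = jcod n -> F.2 (jcomp m n) = jcomp (F.2 m) (F.2 n))].

(* morphism of quasi-schemoids: functor sending each block into some block *)
Definition is_qsmor (F : qmor) : Prop :=
  is_functor F /\ (forall m n, jblk m = jblk n -> jblk (F.2 m) = jblk (F.2 n)).

Definition qcomp (F G : qmor) : qmor := (F.1 \o G.1, F.2 \o G.2).
Definition qid : qmor := (id, id).

Definition pdom (p : (X * X) * mor1) : X * bool := (jdom p.1, dom1 p.2).
Definition pcod (p : (X * X) * mor1) : X * bool := (jcod p.1, cod1 p.2).
Definition pid (o : X * bool) : (X * X) * mor1 := (jid o.1, idm1 o.2).
Definition pcomp (p q : (X * X) * mor1) : (X * X) * mor1 :=
  (jcomp p.1 q.1, comp1 p.2 q.2).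
(* blocks sigma x {g}, sigma in S, g a morphism of [1] *)
Definition pblk (p : (X * X) * mor1) : bool * mor1 := (jblk p.1, p.2).

Definition is_homotopy (Ho : X * bool -> X) (Hm : (X * X) * mor1 -> X * X)
    (F G : qmor) : Prop :=
  [/\ (forall p, jdom (Hm p) = Ho (pdom p) /\ jcod (Hm p) = Ho (pcod p)),
      (forall o, Hm (pid o) = jid (Ho o)),
      (forall p q, pdom p = pcod q -> Hm (pcomp p q) = jcomp (Hm p) (Hm q)),
      (forall p q, pblk p = pblk q -> jblk (Hm p) = jblk (Hm q)) &
      [/\ (forall a, Ho (a, false) = F.1 a), (forall m, Hm (m, id0) = F.2 m),
          (forall a, Ho (a, true) = G.1 a) & (forall m, Hm (m, id1) = G.2 m)]].

Definition homotopic (F G : qmor) : Prop :=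
  exists Ho Hm, is_homotopy Ho Hm F G.

Definition qsim (F G : qmor) : Prop :=
  is_qsmor F /\ is_qsmor G /\ (homotopic F G \/ homotopic G F).

Definition qhequiv : qmor -> qmor -> Prop := @clos_refl_trans qmor qsim.

Definition self_heq (F : qmor) : Prop :=
  is_qsmor F /\
  exists G, is_qsmor G /\ qhequiv (qcomp F G) qid /\ qhequiv (qcomp G F) qid.

End JX.

From mathcomp Require Import all_boot.
From Stdlib Require Import FunctionalExtensionality.

(* A morphism of j(X,S) is determined by its object map f, and it sends (x, y)
   to (f x, f y); a homotopy K => L contributes the arrow (x, y) |-> (L x, K y).
   For the trivial partition, block preservation of such a "cross" map (f, g)
   says that whether f x = g y depends only on whether x = y.  Taking f = g, a
   morphism is injective or constant.  Constancy propagates along homotopies,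
   and the identity is not constant, so self-homotopy equivalences are
   injective.  If g is injective and the cross map (f, g) preserves blocks,
   then f = g: otherwise f x <> g x for every x, so for a fixed x either
   f x = g y for no y, against surjectivity of g, or for every y <> x, against
   injectivity of g once #|X| >= 3. *)

Section TrivialScheme.
Context {X : finType}.

Definition cross (f g : X -> X) (m : X * X) : X * X := (f m.1, g m.2).

Definition block_preserving (h : X * X -> X * X) : Prop :=
  forall m n, jblk m = jblk n -> jblk (h m) = jblk (h n).

Definition constant_map (f : X -> X) : Prop := forall x y, f x = f y.

Section CrossMaps.
Context {f g : X -> X}.
Hypothesis fg_blk : block_preserving (cross f g).

Lemma cross_diag_eq (x y : X) : (f x == g x) = (f y == g y).
Proof. by have := fg_blk (x, x) (y, y); rewrite /jblk /= !eqxx; apply. Qed.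

Lemma cross_offdiag_eq (x y x' y' : X) :
  x != y -> x' != y' -> (f x == g y) = (f x' == g y').
Proof.
move=> /negbTE xy /negbTE xy'.
by have := fg_blk (x, y) (x', y'); rewrite /jblk /= xy xy'; apply.
Qed.

Lemma cross_swap : block_preserving (cross g f).
Proof.
move=> [x y] [x' y']; rewrite /jblk /= => e.
rewrite eq_sym [g x' == _]eq_sym; apply: (fg_blk (y, x) (y', x')).
by rewrite /jblk /= eq_sym e eq_sym.
Qed.

Lemma cross_eqfun (x0 : X) : f x0 = g x0 -> f =1 g.
Proof. by move=> e x; apply/eqP; rewrite (cross_diag_eq x x0) e. Qed.

Lemma cross_eqfun_inj : 2 < #|X| -> injective g -> f =1 g.
Proof.
case/card_gt2P=> [a [b [c [_ [ab bc ca]]]]] g_inj.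
case fga: (f a == g a); first exact/(cross_eqfun a)/eqP.
have /codomP [x gx] := injF_onto g_inj (f a).
have xa : x != a by apply/eqP => xa; rewrite gx xa eqxx in fga.
have f_off y : y != a -> f a = g y.
  by move=> ya; apply/eqP; rewrite (cross_offdiag_eq a y a x) 1?eq_sym ?gx.
have /g_inj eb : g b = g c by rewrite -!f_off // eq_sym.
by rewrite eb eqxx in bc.
Qed.

End CrossMaps.

Lemma self_cross_inj_or_const {f : X -> X} :
  1 < #|X| -> block_preserving (cross f f) -> injective f \/ constant_map f.
Proof.
case/card_gt1P=> [x0 [y0 [_ _ xy0]]] f_blk.
have off_eq x y := cross_offdiag_eq f_blk x y x0 y0.
case e: (f x0 == f y0); [right | left] => x y.
  by case: (eqVneq x y) => [-> | xy] //; apply/eqP; rewrite off_eq.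
by move=> fxy; apply: contraFeq e => xy; rewrite -(off_eq x y) ?fxy.
Qed.

Lemma const_cross {f g : X -> X} : 1 < #|X| ->
  block_preserving (cross g g) -> block_preserving (cross g f) ->
  constant_map f -> constant_map g.
Proof.
move=> X2 gg gf f_const.
have [g_inj | //] := self_cross_inj_or_const X2 gg.
have [x0 _] : exists x0 : X, true by case/card_gt1P: X2 => x [].
have /codomP [x1 gx1] := injF_onto g_inj (f x0).
have eq_gf := cross_eqfun gf x1 (etrans (esym gx1) (f_const x0 x1)).
by move=> x y; rewrite !eq_gf.
Qed.

Lemma qsmor_morE {K : qmor X} : is_qsmor K -> K.2 =1 cross K.1 K.1.
Proof.
case=> [[K_ends _ _] _] m; have [e_dom e_cod] := K_ends m.
by rewrite /cross -e_dom -e_cod /jdom /jcod; case: (K.2 m).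
Qed.

Lemma qsmor_cross {K : qmor X} : is_qsmor K -> block_preserving (cross K.1 K.1).
Proof. by move=> KH m n; rewrite -!(qsmor_morE KH); apply: KH.2. Qed.

Lemma qsmor_eq {K L : qmor X} : is_qsmor K -> is_qsmor L -> K.1 =1 L.1 -> K = L.
Proof.
move=> KH LH eKL; have e1 := functional_extensionality _ _ eKL.
have e2 : K.2 = L.2.
  by apply: functional_extensionality => m; rewrite qsmor_morE // qsmor_morE // e1.
by case: K L {KH LH eKL} e1 e2 => [? ?] [? ?] /= -> ->.
Qed.

Lemma homotopy_arrowE {Ho Hm} {K L : qmor X} :
  is_homotopy Ho Hm K L -> forall m, Hm (m, arr01) = cross L.1 K.1 m.
Proof.
case=> H_ends _ _ _ [K0 _ L1 _] m; have [e_dom e_cod] := H_ends (m, arr01).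
rewrite /cross -K0 -L1 -[(Ho _)]e_cod -[(Ho (_, false))]e_dom /jdom /jcod.
by case: (Hm _).
Qed.

Lemma homotopy_cross {Ho Hm} {K L : qmor X} :
  is_homotopy Ho Hm K L -> block_preserving (cross L.1 K.1).
Proof.
move=> H m n e; rewrite -!(homotopy_arrowE H).
by case: H => _ _ _ H_blk _; apply: H_blk; rewrite /pblk /= e.
Qed.

Lemma qsim_cross {K L : qmor X} : qsim K L -> block_preserving (cross L.1 K.1).
Proof.
case=> _ [_ [[Ho [Hm H]] | [Ho [Hm H]]]]; first exact: homotopy_cross H.
exact/cross_swap/(homotopy_cross H).
Qed.

Lemma qhequiv_const {K L : qmor X} :
  1 < #|X| -> qhequiv K L -> constant_map K.1 -> constant_map L.1.
Proof.
move=> X2; elim=> {K L} [K L KL | // | K M L _ IH1 _ IH2].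
  exact: const_cross X2 (qsmor_cross KL.2.1) (qsim_cross KL).
by move/IH1/IH2.
Qed.

Lemma self_heq_inj {F : qmor X} : 1 < #|X| -> self_heq F -> injective F.1.
Proof.
move=> X2 [FH [G [_ [FG_id _]]]].
have [// | F_const] := self_cross_inj_or_const X2 (qsmor_cross FH).
have FG_const : constant_map (qcomp F G).1 by move=> x y; apply: F_const.
have id_const := qhequiv_const X2 FG_id FG_const.
case/card_gt1P: X2 => [x [y [_ _ /eqP]]].
by case; apply: id_const.
Qed.

End TrivialScheme.

Theorem lemma4p3 (X : finType) (F G : qmor X) :
  2 < #|X| -> self_heq F -> self_heq G -> qsim F G -> F = G.
Proof.
move=> X3 F_heq _ FG.
have F_inj := self_heq_inj (ltnW X3) F_heq.
have GF := cross_eqfun_inj (qsim_cross FG) X3 F_inj.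
by apply: qsmor_eq FG.1 FG.2.1 _ => x; rewrite GF.
Qed.
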